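(* For any finite alphabet $\mathfrak{G}$, the pair of graded graphs $(\mathbf{S}_\bullet(\mathfrak{G}), \mathbf{U}, \mathbf{V})$ is $\phi$-diagonal dual, i.e. $\mathbf{V}^\star \mathbf{U} - \mathbf{U} \mathbf{V}^\star = \phi$, for the linear map $\phi : \mathbb{K}\langle\mathbf{S}_\bullet(\mathfrak{G})\rangle \to \mathbb{K}\langle\mathbf{S}_\bullet(\mathfrak{G})\rangle$ satisfying $\phi(\mathfrak{t}) = (\#\mathfrak{G})\, \mathrm{nf}(\mathfrak{t})\, \mathfrak{t}$ for any $\mathfrak{G}$-tree $\mathfrak{t}$.
   Context: $\mathfrak{G}$ is a finite alphabet: a finite set of letters, each letter $\mathtt{a}$ having an arity $|\mathtt{a}|\geq 1$. A $\mathfrak{G}$-tree is either the leaf (the unique tree with no internal node) or $\mathtt{a}[\mathfrak{s}_1,\dots,\mathfrak{s}_{|\mathtt{a}|}]$, a root decorated by $\mathtt{a}\in\mathfrak{G}$ whose children are the $\mathfrak{G}$-trees $\mathfrak{s}_1,\dots,\mathfrak{s}_{|\mathtt{a}|}$. The degree $\deg(\mathfrak{t})$ is the number of internal nodes, the arity $|\mathfrak{t}|$ the number of leaves (ordered from left to right). $\mathbf{S}_\bullet(\mathfrak{G})$ is the set of $\mathfrak{G}$-trees graded by degree. Nodes are addressed by words of positive integers: the root is $\epsilon$ and the $i$-th child of $u$ is $ui$. For $i\in[|\mathfrak{t}|]$, $\mathfrak{t}\circ_i \mathtt{a}$ is obtained by replacing the $i$-th leaf of $\mathfrak{t}$ by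 an internal node decorated by $\mathtt{a}$ with $|\mathtt{a}|$ leaves as children. The linear map $\mathbf{U}$ is defined by $\mathbf{U}(\mathfrak{t}) = \sum_{\mathtt{a}\in\mathfrak{G},\, i\in[|\mathfrak{t}|]} \mathfrak{t}\circ_i \mathtt{a}$. The linear map $\mathbf{V}$ is the adjoint (for the scalar product making $\mathfrak{G}$-trees orthonormal) of the map $\mathbf{V}^\star$ defined recursively by: $\mathbf{V}^\star$ of the leaf is $0$; $\mathbf{V}^\star(\mathtt{a}[\mathfrak{s}, \text{leaf}, \dots, \text{leaf}]) = \mathfrak{s}$; and $\mathbf{V}^\star(\mathtt{a}[\mathfrak{s}_1,\dots,\mathfrak{s}_{|\mathtt{a}|}]) = \sum_{j\in[2,|\mathtt{a}|]} \mathtt{a}[\mathfrak{s}_1,\dots,\mathfrak{s}_{j-1},\mathbf{V}^\star(\mathfrak{s}_j),\mathfrak{s}_{j+1},\dots,\mathfrak{s}_{|\mathtt{a}|}]$ when some $\mathfrak{s}_j$ with $j\geq 2$ is not the leaf. A leaf of $\mathfrak{t}$ is non-first if its address word contains no letter $1$, and $\mathrm{nf}(\mathfrak{t})$ is the number of non-first leaves of $\mathfrak{t}$ (so $\mathrm{nf}$ of the leaf is $1$). *)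

From mathcomp Require Import all_boot all_algebra.
Set Implicit Arguments. Unset Strict Implicit. Unset Printing Implicit Defensive.
Import GRing.Theory.
Local Open Scope ring_scope.

(* G-trees: [Leaf] is the leaf, [Node a ts] the tree a[ts_1,...,ts_k].
   Well-formedness (k = |a|) is the predicate [wf] below. *)
Inductive tree (G : Type) : Type :=
| Leaf : tree G
| Node : G -> seq (tree G) -> tree G.
Arguments Leaf {G}.

Section Trees.
Variable G : finType.
Variable ar : G -> nat.

Fixpoint wf (t : tree G) : bool :=
  match t with
  | Leaf => true
  | Node a ts => (size ts == ar a) && all wf ts
  end.

Fixpoint tree_eq (t u : tree G) : bool :=
  match t, u with
  | Leaf, Leaf => true
  | Node a ts, Node b us =>
      (a == b) &&
      (fix go (l1 l2 : seq (tree G)) : bool :=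
         match l1, l2 with
         | [::], [::] => true
         | x :: r1, y :: r2 => tree_eq x y && go r1 r2
         | _, _ => false
         end) ts us
  | _, _ => false
  end.

Definition isLeaf (t : tree G) : bool := if t is Leaf then true else false.

Fixpoint leaves (t : tree G) : nat :=
  match t with
  | Leaf => 1
  | Node _ ts => sumn (map leaves ts)
  end.

(* number of non-first leaves: leaves whose address contains no letter 1 *)
Fixpoint nf (t : tree G) : nat :=
  match t with
  | Leaf => 1
  | Node _ [::] => 0
  | Node _ (_ :: ss) => sumn (map nf ss)
  end.

Definition corolla (a : G) : tree G := Node a (nseq (ar a) Leaf).

(* graft t i a = t o_{i+1} a  (leaves indexed from 0 here) *)
Fixpoint graft (t : tree G) (i : nat) (a : G) : tree G :=
  match t with
  | Leaf => if i == 0%N then corolla a else Leaf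
  | Node b ts =>
      Node b ((fix go (l : seq (tree G)) (j : nat) : seq (tree G) :=
                 match l with
                 | [::] => [::]
                 | s :: r => if (j < leaves s)%N then graft s j a :: r
                             else s :: go r (j - leaves s)%N
                 end) ts i)
  end.

Variable K : fieldType.

(* elements of K<S(G)>: finite formal linear combinations of trees *)
Definition vec := seq (K * tree G).

Definition coef (v : vec) (t : tree G) : K :=
  \sum_(p <- v | tree_eq p.2 t) p.1.

Definition lin (f : tree G -> vec) (v : vec) : vec :=
  flatten [seq [seq (p.1 * q.1, q.2) | q <- f p.2] | p <- v].

Definition U (t : tree G) : vec :=
  [seq (1, graft t i a) | a <- enum G, i <- iota 0 (leaves t)].

Fixpoint Vstar (t : tree G) : vec :=
  match t with
  | Leaf => [::]
  | Node _ [::] => [::]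
  | Node a (s :: ss) =>
      if all isLeaf ss then [:: (1, s)]
      else (fix go (pre l : seq (tree G)) : vec :=
              match l with
              | [::] => [::]
              | x :: r =>
                  [seq (q.1, Node a (s :: pre ++ q.2 :: r)) | q <- Vstar x]
                  ++ go (rcons pre x) r
              end) [::] ss
  end.

Definition phi (t : tree G) : vec := [:: ((#|G| * nf t)%:R, t)].

End Trees.

(* Pair vectors with arbitrary test functions [h]: [coef v t] is the pairing with
   the indicator of [t], and the theorem becomes an identity between sums over
   lists of trees.  For a letter [a], [graftings a x] lists the trees [x o_i a]
   and [prunings x] lists [V* x], all of whose coefficients are 1.  Grafting [a]
   and then pruning yields the trees obtained by pruning and then grafting, plus
   [x] itself once for every non-first leaf of [x]: there the freshly grafted
   corolla is exactly the node pruned away.  Summing over the [#G] letters gives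
   [phi].  The identity is proved by induction on [x], together with its analogue
   for the forest of non-first subtrees of a node. *)

From mathcomp Require Import all_boot all_algebra.
Set Implicit Arguments. Unset Strict Implicit. Unset Printing Implicit Defensive.
Import GRing.Theory.
Local Open Scope ring_scope.

Section TreeCombinatorics.
Variables (G : finType) (ar : G -> nat).

Definition tree_nested_ind (P : tree G -> Prop) (P_Leaf : P Leaf)
    (P_Node : forall b ts, foldr (fun s Ps => P s /\ Ps) True ts -> P (Node b ts)) :
    forall t, P t :=
  fix IH t := match t with
  | Leaf => P_Leaf
  | Node b ts =>
      P_Node b ts ((fix IHs ts : foldr (fun s Ps => P s /\ Ps) True ts :=
                      match ts with
                      | [::] => I
                      | s :: ss => conj (IH s) (IHs ss)
                      end) ts)
  end.

Fixpoint forest_graft (ts : seq (tree G)) (i : nat) (a : G) : seq (tree G) :=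
  match ts with
  | [::] => [::]
  | s :: ss => if (i < leaves s)%N then graft ar s i a :: ss
               else s :: forest_graft ss (i - leaves s) a
  end.

Lemma graft_Node b ts i a : graft ar (Node b ts) i a = Node b (forest_graft ts i a).
Proof. by congr Node; elim: ts i => //= s ss IH i; rewrite IH. Qed.

Definition graftings (a : G) (t : tree G) : seq (tree G) :=
  [seq graft ar t i a | i <- iota 0 (leaves t)].

Definition forest_graftings (a : G) (ts : seq (tree G)) : seq (seq (tree G)) :=
  [seq forest_graft ts i a | i <- iota 0 (sumn (map (@leaves G) ts))].

Lemma graftings_Node a b ts :
  graftings a (Node b ts) = map (Node b) (forest_graftings a ts).
Proof.
rewrite /graftings /forest_graftings -map_comp.
by apply: eq_map => i; apply: graft_Node.
Qed.

Lemma forest_graftings_cons a s ss :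
  forest_graftings a (s :: ss) =
  map (cons^~ ss) (graftings a s) ++ map (cons s) (forest_graftings a ss).
Proof.
rewrite /forest_graftings /graftings /= iotaD map_cat add0n; congr (_ ++ _).
  by rewrite -map_comp; apply/eq_in_map => i; rewrite mem_iota /= => ->.
rewrite -[in LHS](addn0 (leaves s)) iotaDl -!map_comp; apply: eq_map => i /=.
by rewrite addn0 ltnNge leq_addr addKn.
Qed.

Fixpoint prunings (t : tree G) : seq (tree G) :=
  match t with
  | Node b (s :: ss) =>
      if all (@isLeaf G) ss then [:: s]
      else [seq Node b (s :: l) | l <-
             (fix forest_prunings ts := match ts with
               | [::] => [::]
               | x :: r => map (cons^~ r) (prunings x) ++ map (cons x) (forest_prunings r)
               end) ss]
  | _ => [::]
  end.

Fixpoint forest_prunings (ts : seq (tree G)) : seq (seq (tree G)) :=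
  match ts with
  | [::] => [::]
  | s :: ss => map (cons^~ ss) (prunings s) ++ map (cons s) (forest_prunings ss)
  end.

Lemma prunings_Node b s ss :
  prunings (Node b (s :: ss)) =
  if all (@isLeaf G) ss then [:: s] else [seq Node b (s :: l) | l <- forest_prunings ss].
Proof. by rewrite /=; case: ifP => // _; congr map; elim: ss => //= x r ->. Qed.

Lemma forest_prunings_leaves ts :
  all (@isLeaf G) ts -> forest_prunings ts = [::].
Proof. by elim: ts => //= -[|b us] ss IH //= /IH ->. Qed.

Lemma prunings_corolla a : (0 < ar a)%N -> prunings (corolla ar a) = [:: Leaf].
Proof. by rewrite /corolla; case: (ar a) => // n _ /=; rewrite all_nseq orbT. Qed.

Lemma forest_graftings_not_leaves a ts :
  all (fun l => ~~ all (@isLeaf G) l) (forest_graftings a ts).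
Proof.
elim: ts => // s ss IH; rewrite forest_graftings_cons all_cat; apply/andP; split.
  case: s => [|b us] //; rewrite graftings_Node -map_comp all_map.
  by elim: (forest_graftings a us).
by rewrite all_map; apply: (sub_all _ IH) => l /= /negbTE ->; rewrite andbF.
Qed.

Section GraftPruneCommutation.
Variables (V : nmodType) (a : G).
Hypothesis ar_a_gt0 : (0 < ar a)%N.

Lemma sum_graftings_Node_cons b s ss (h : tree G -> V) :
  \sum_(z <- graftings a (Node b (s :: ss))) h z =
  \sum_(y <- graftings a s) h (Node b (y :: ss)) +
  \sum_(l <- forest_graftings a ss) h (Node b (s :: l)).
Proof.
by rewrite graftings_Node forest_graftings_cons map_cat big_cat -!map_comp !big_map.
Qed.

Lemma sum_forest_graftings_cons s ss (h : seq (tree G) -> V) :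
  \sum_(l <- forest_graftings a (s :: ss)) h l =
  \sum_(y <- graftings a s) h (y :: ss) + \sum_(l <- forest_graftings a ss) h (s :: l).
Proof. by rewrite forest_graftings_cons big_cat !big_map. Qed.

Lemma sum_forest_prunings_cons s ss (h : seq (tree G) -> V) :
  \sum_(l <- forest_prunings (s :: ss)) h l =
  \sum_(y <- prunings s) h (y :: ss) + \sum_(l <- forest_prunings ss) h (s :: l).
Proof. by rewrite /= big_cat !big_map. Qed.

Definition graft_prune_identity (x : tree G) : Prop := forall h : tree G -> V,
  \sum_(y <- graftings a x) \sum_(z <- prunings y) h z =
  \sum_(y <- prunings x) \sum_(z <- graftings a y) h z + h x *+ nf x.

Lemma forest_graft_prune_identity ts :
  foldr (fun s P => graft_prune_identity s /\ P) True ts ->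
  forall h : seq (tree G) -> V,
  \sum_(l <- forest_graftings a ts) \sum_(m <- forest_prunings l) h m =
  \sum_(l <- forest_prunings ts) \sum_(m <- forest_graftings a l) h m
  + h ts *+ sumn (map (@nf G) ts).
Proof.
elim: ts => [_ h|s ss IH [Hs Hss] h]; first by rewrite !big_nil add0r.
rewrite sum_forest_graftings_cons sum_forest_prunings_cons.
rewrite (eq_bigr _ (fun y _ => sum_forest_prunings_cons y ss h)).
rewrite (eq_bigr _ (fun l _ => sum_forest_prunings_cons s l h)).
rewrite (eq_bigr _ (fun y _ => sum_forest_graftings_cons y ss h)).
rewrite (eq_bigr _ (fun l _ => sum_forest_graftings_cons s l h)).
rewrite !big_split /= (Hs (fun z => h (z :: ss))) (IH Hss (fun l => h (s :: l))).
rewrite (exchange_big _ _ (graftings a s)) (exchange_big _ _ (forest_graftings a ss)).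
rewrite mulrnDr.
by rewrite [LHS](AC (3*(1*2)) ((1*4)*(3*5)*(2*6))).
Qed.

Lemma graft_prune_commute x : graft_prune_identity x.
Proof.
elim/tree_nested_ind: x => [|b [|s ss] IH] h.
- by rewrite /= !big_seq1 prunings_corolla // big_seq1 big_nil add0r.
- by rewrite /= !big_nil add0r.
case: IH => _ Hss.
have prune_grafted :
    \sum_(l <- forest_graftings a ss) \sum_(z <- prunings (Node b (s :: l))) h z =
    \sum_(l <- forest_graftings a ss) \sum_(m <- forest_prunings l) h (Node b (s :: m)).
  rewrite -(all_filterP (forest_graftings_not_leaves a ss)) !big_filter.
  by apply: eq_bigr => l /negbTE leaves_l; rewrite prunings_Node leaves_l big_map.
rewrite sum_graftings_Node_cons prune_grafted.
rewrite (forest_graft_prune_identity Hss (fun l => h (Node b (s :: l)))) [nf _]/= addrA.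
congr (_ + _); case: (boolP (all (@isLeaf G) ss)) => [leaves_ss|not_leaves_ss].
  rewrite forest_prunings_leaves // big_nil addr0 prunings_Node leaves_ss big_seq1.
  by apply: eq_bigr => y _; rewrite prunings_Node leaves_ss big_seq1.
under eq_bigr do rewrite prunings_Node (negbTE not_leaves_ss) big_map.
rewrite prunings_Node (negbTE not_leaves_ss) [RHS]big_map.
rewrite (eq_bigr _ (fun l _ => sum_graftings_Node_cons b s l h)) big_split /=.
by rewrite exchange_big.
Qed.

End GraftPruneCommutation.

End TreeCombinatorics.

Section Pairing.
Variable R : pzSemiRingType.

Definition pairing (T : Type) (h : T -> R) (v : seq (R * T)) : R :=
  \sum_(p <- v) p.1 * h p.2.

Lemma eq_pairing (T : Type) (f g : T -> R) v :
  (forall x, f x = g x) -> pairing f v = pairing g v.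
Proof. by move=> fg; apply: eq_bigr => p _; rewrite fg. Qed.

Lemma pairingD (T : Type) (f g : T -> R) v :
  pairing (fun x => f x + g x) v = pairing f v + pairing g v.
Proof. by rewrite -big_split; apply: eq_bigr => p _; rewrite mulrDr. Qed.

Lemma pairing_pair1 (T : Type) (h : T -> R) s :
  pairing h (map (pair 1) s) = \sum_(y <- s) h y.
Proof. by rewrite /pairing big_map; apply: eq_bigr => y _; rewrite mul1r. Qed.

End Pairing.

Section DualGradedGraphs.
Variables (G : finType) (ar : G -> nat) (K : fieldType).

Lemma coef_pairing (v : vec G K) t : coef v t = pairing (fun u => (tree_eq u t)%:R) v.
Proof.
rewrite /coef big_mkcond; apply: eq_bigr => p _.
by case: tree_eq; rewrite ?mulr1 ?mulr0.
Qed.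

Lemma pairing_lin (f : tree G -> vec G K) h v :
  pairing h (lin f v) = pairing (fun u => pairing h (f u)) v.
Proof.
rewrite /pairing /lin big_flatten big_map; apply: eq_bigr => p _.
by rewrite big_map mulr_sumr; apply: eq_bigr => q _; rewrite mulrA.
Qed.

Lemma U_graftings (t : tree G) :
  U ar K t = map (pair 1) (flatten [seq graftings ar a t | a <- enum G]).
Proof.
rewrite map_flatten -map_comp /U; congr flatten.
by apply: eq_map => a /=; rewrite -map_comp.
Qed.

Lemma Vstar_prunings (t : tree G) : Vstar K t = map (pair 1) (prunings t).
Proof.
elim/tree_nested_ind: t => // b [|s ss] // [_ IH] /=; case: ifP => // _.
match goal with |- ?go _ _ = _ =>
  suff go_pre : forall pre, go pre ss =
    [seq (1, Node b (s :: pre ++ l)) | l <- forest_prunings ss]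
  by rewrite go_pre -map_comp end.
elim: ss IH => //= x r IHr [IHx IH] pre.
rewrite IHx IHr // map_cat -!map_comp; congr (_ ++ _).
by apply: eq_map => l /=; rewrite cat_rcons.
Qed.

Lemma pairing_phi h (t : tree G) : pairing h (phi K t) = h t *+ (#|G| * nf t).
Proof. by rewrite /pairing big_seq1 mulr_natl. Qed.

Lemma pairing_VstarU (ar_gt0 : forall a, (0 < ar a)%N) h (x : tree G) :
  pairing (fun y => pairing h (Vstar K y)) (U ar K x) =
  pairing (fun y => pairing h (U ar K y)) (Vstar K x) + pairing h (phi K x).
Proof.
rewrite U_graftings Vstar_prunings !pairing_pair1 pairing_phi big_flatten big_map.
under eq_bigr => a _.
  under eq_bigr => y _ do rewrite Vstar_prunings pairing_pair1.
  rewrite (graft_prune_commute (ar_gt0 a)).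
  over.
rewrite big_split /=; congr (_ + _).
  rewrite exchange_big; apply: eq_bigr => y _.
  by rewrite U_graftings pairing_pair1 big_flatten big_map.
by rewrite big_enum sumr_const -mulrnA mulnC.
Qed.

End DualGradedGraphs.

Theorem theorem2p7 (G : finType) (ar : G -> nat) (K : fieldType) :
  (forall a : G, (0 < ar a)%N) ->
  forall v : vec G K, all (wf ar) (map snd v) ->
  forall t : tree G,
    coef (lin (@Vstar G K) (lin (@U G ar K) v)) t
    - coef (lin (@U G ar K) (lin (@Vstar G K) v)) t
    = coef (lin (@phi G K) v) t.
Proof.
move=> ar_gt0 v _ t.
by rewrite !coef_pairing !pairing_lin (eq_pairing _ (pairing_VstarU ar_gt0 _))
  pairingD addrC addKr.
Qed.
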